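(* Let $n\ge1$, let $\mu,\nu\in\mathbb{R}^n$ be probability vectors, let $\gamma>0$, and let $\phi$ satisfy the Bregman assumption in the context with $\phi'_0$ finite. Let $\hat C\in\mathbb{R}^{n\times n}$ and $\hat X:=\mathcal{F}(\hat C)$. If $\hat X_{ij}=0$ for some $1\le i,j\le n$, then for every $\lambda>0$, $$\mathcal{F}(\hat C)=\hat X=\mathcal{F}(\hat C+\lambda E^{(i,j)}),$$ where $E^{(i,j)}$ is the $n\times n$ matrix with $1$ in entry $(i,j)$ and zeros elsewhere.
   Context: Probability vectors have nonnegative entries summing to $1$. $\mathcal{U}(\mu,\nu):=\{X\in\mathbb{R}_+^{n\times n}: X\mathbf{1}=\mu,\ X^\top\mathbf{1}=\nu\}$. Bregman assumption on $\phi:\mathbb{R}\to(-\infty,+\infty]$: $I=\operatorname{dom}\phi$ is an interval with $(0,1)\subseteq\operatorname{int}(I)$; $\phi$ is of Legendre type (proper, closed, strictly convex on $\operatorname{int}(\operatorname{dom}\phi)$, essentially smooth); $\phi$ is $C^1$ on $\operatorname{int}(I)$. $\phi(X):=\sum_{i,j}\phi(X_{ij})$. $\mathcal{F}(C):=\arg\min_{X\in\mathcal{U}(\mu,\nu)}\{\langle C,X\rangle+\gamma\phi(X)\}$ (the unique minimizer). $\phi'_0:=\lim_{x\to0^+}\phi'(x)\in[-\infty,\infty)$. *)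

From HB Require Import structures.
From mathcomp Require Import all_boot all_order all_algebra.
From mathcomp Require Import all_classical all_reals all_analysis.
Set Implicit Arguments. Unset Strict Implicit. Unset Printing Implicit Defensive.
Import Order.TTheory GRing.Theory Num.Theory.
Import numFieldNormedType.Exports.
Local Open Scope classical_set_scope.
Local Open Scope ring_scope.

Section Defs.
Variable R : realType.

Definition edom (phi : R -> \bar R) : set R := [set x | (phi x < +oo)%E].

(* the real-valued restriction of phi (meaningful on edom phi) *)
Definition phir (phi : R -> \bar R) : R -> R := fun x => fine (phi x).

Definition dphi (phi : R -> \bar R) : R -> R := derive1 (phir phi).

(* convexity of an extended-real-valued function (only points of the domain
   matter; for points outside the domain the inequality is trivial) *)
Definition econvex (phi : R -> \bar R) :=
  forall x y t : R, edom phi x -> edom phi y -> (0 <= t <= 1)%R ->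
    (phi (t * x + (1 - t) * y)%R <= t%:E * phi x + (1 - t)%R%:E * phi y)%E.

Definition strictly_convex_on (phi : R -> \bar R) (A : set R) :=
  forall x y t : R, A x -> A y -> x != y -> (0 < t < 1)%R ->
    (phi (t * x + (1 - t) * y)%R < t%:E * phi x + (1 - t)%R%:E * phi y)%E.

Definition essentially_smooth (phi : R -> \bar R) :=
  [/\ interior (edom phi) !=set0,
      (forall x, interior (edom phi) x -> derivable (phir phi) x 1) &
      (forall (u : R^nat) (x : R), (forall k, interior (edom phi) (u k)) ->
         u @ \oo --> x -> ~ interior (edom phi) x ->
         (fun k => `|dphi phi (u k)|) @ \oo --> +oo)].

Definition legendre (phi : R -> \bar R) :=
  [/\ (forall x, phi x != -oo%E) /\ edom phi !=set0,
      lower_semicontinuous phi,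
      econvex phi,
      strictly_convex_on phi (interior (edom phi)) &
      essentially_smooth phi].

Definition bregman_assumption (phi : R -> \bar R) :=
  [/\ is_interval (edom phi),
      [set x : R | 0 < x < 1] `<=` interior (edom phi),
      legendre phi &
      (forall x, interior (edom phi) x ->
         derivable (phir phi) x 1 /\ {for x, continuous (dphi phi)})].

Definition dphi0_finite (phi : R -> \bar R) :=
  exists l : R, dphi phi x @[x --> 0^'+] --> l.

Definition prob_vector n (mu : 'I_n -> R) :=
  (forall i, 0 <= mu i) /\ \sum_(i < n) mu i = 1.

Definition transport_polytope n (mu nu : 'I_n -> R) : set 'M[R]_n :=
  [set X | (forall i j, 0 <= X i j) /\
           (forall i, \sum_(j < n) X i j = mu i) /\
           (forall j, \sum_(i < n) X i j = nu j)].

Definition ot_objective n (gamma : R) (phi : R -> \bar R) (C X : 'M[R]_n) : \bar R :=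
  ((\sum_(i < n) \sum_(j < n) C i j * X i j)%:E
   + gamma%:E * (\sum_(i < n) \sum_(j < n) phi (X i j)))%E.

Definition ot_argmin n (mu nu : 'I_n -> R) (gamma : R) (phi : R -> \bar R)
  (C : 'M[R]_n) : set 'M[R]_n :=
  [set X | transport_polytope mu nu X /\
     forall Y, transport_polytope mu nu Y ->
       (ot_objective gamma phi C X <= ot_objective gamma phi C Y)%E].

Definition is_F n (mu nu : 'I_n -> R) (gamma : R) (phi : R -> \bar R)
  (C X : 'M[R]_n) : Prop := ot_argmin mu nu gamma phi C = [set X].

End Defs.

From HB Require Import structures.
From mathcomp Require Import all_boot all_order all_algebra.
From mathcomp Require Import all_classical all_reals all_analysis.
Set Implicit Arguments. Unset Strict Implicit. Unset Printing Implicit Defensive.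
Import Order.TTheory GRing.Theory Num.Theory.
Local Open Scope classical_set_scope.
Local Open Scope ring_scope.

(* Raising the cost of entry (i, j) by lambda >= 0 raises the objective of Y by
   lambda * Y_ij >= 0 and leaves it unchanged where Y_ij = 0.  Hence Xhat stays a
   minimizer, and every new minimizer X satisfies
   obj_C(X) <= obj_C'(X) <= obj_C'(Xhat) = obj_C(Xhat), so X is an old minimizer
   and therefore equals Xhat by uniqueness. *)

Section PerturbedCost.
Variables (R : realType) (n : nat).
Implicit Types (C X Xhat Y : 'M[R]_n) (i j : 'I_n) (l : R).

Lemma sum_delta_mx_mul i j Y :
  \sum_(k < n) \sum_(m < n) delta_mx i j k m * Y k m = Y i j.
Proof.
rewrite (bigD1 i) //= [X in _ + X]big1 ?addr0 => [|k /negPf nki]; last first.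
  by apply: big1 => m _; rewrite mxE nki mul0r.
rewrite (bigD1 j) //= [X in _ + X]big1 ?addr0 => [|m /negPf nmj]; last first.
  by rewrite mxE eqxx nmj mul0r.
by rewrite mxE !eqxx mul1r.
Qed.

Lemma ot_objective_add_delta (gamma : R) (phi : R -> \bar R) C i j l Y :
  ot_objective gamma phi (C + l *: delta_mx i j) Y =
  (ot_objective gamma phi C Y + (l * Y i j)%:E)%E.
Proof.
rewrite /ot_objective addeAC -EFinD; congr (_%:E + _)%E.
rewrite -sum_delta_mx_mul mulr_sumr -big_split /=; apply: eq_bigr => k _.
rewrite mulr_sumr -big_split /=; apply: eq_bigr => m _.
by rewrite !mxE mulrDl mulrA.
Qed.

Variables (mu nu : 'I_n -> R) (gamma : R) (phi : R -> \bar R).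

Lemma ot_argmin_add_delta C i j l X :
  0 <= l -> X i j = 0 -> ot_argmin mu nu gamma phi C X ->
  ot_argmin mu nu gamma phi (C + l *: delta_mx i j) X.
Proof.
move=> l_ge0 Xij0 [UX Xmin]; split=> // Y UY.
rewrite !ot_objective_add_delta Xij0 mulr0 adde0.
apply: (le_trans (Xmin Y UY)); rewrite leeDl // lee_fin.
by rewrite mulr_ge0 // UY.1.
Qed.

Lemma ot_argmin_add_delta_sub C i j l Xhat :
  0 <= l -> Xhat i j = 0 -> ot_argmin mu nu gamma phi C Xhat ->
  ot_argmin mu nu gamma phi (C + l *: delta_mx i j) `<=`
  ot_argmin mu nu gamma phi C.
Proof.
move=> l_ge0 Xhatij0 [UXhat Xhatmin] X [UX Xmin]; split=> // Y UY.
apply: le_trans (Xhatmin Y UY).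
have := Xmin Xhat UXhat; rewrite !ot_objective_add_delta Xhatij0 mulr0 adde0.
apply: le_trans; rewrite leeDl // lee_fin.
by rewrite mulr_ge0 // UX.1.
Qed.

End PerturbedCost.

Theorem proposition5 (R : realType) (n : nat) (hn : (0 < n)%N)
  (mu nu : 'I_n -> R) (hmu : prob_vector mu) (hnu : prob_vector nu)
  (gamma : R) (hgamma : 0 < gamma)
  (phi : R -> \bar R) (hphi : bregman_assumption phi) (hphi0 : dphi0_finite phi)
  (Chat Xhat : 'M[R]_n) (hX : is_F mu nu gamma phi Chat Xhat)
  (i j : 'I_n) (hij : Xhat i j = 0) :
  forall lambda : R, 0 < lambda ->
    is_F mu nu gamma phi (Chat + lambda *: delta_mx i j) Xhat.
Proof.
move=> lambda /ltW lambda_ge0.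
have Xhat_min : ot_argmin mu nu gamma phi Chat Xhat by rewrite hX.
apply/seteqP; split=> [X X_min|X ->].
- by rewrite -hX; exact: (ot_argmin_add_delta_sub lambda_ge0 hij Xhat_min X_min).
- exact: (ot_argmin_add_delta lambda_ge0 hij Xhat_min).
Qed.
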